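(* Let $b\in B$, $i\in I$, $m=\varphi_i(b)$, $\xi\in P$, $j\ge0$, $n\ge0$ and $0\le t\le s\le m$. Suppose $p\in\mathcal P_j(\tilde f_i^sb,\xi)$ and $\tilde e_i^{\,n}p\in\mathcal P_j(\tilde f_i^tb,\xi+(n+t-s)\alpha_i)$. Then $$E(\tilde e_i^{\,n}p)=E(p)+\bigl((j+1)(s-t)-n\bigr)\delta_{0i}.$$
   Context: $\mathfrak g$ is an affine Kac–Moody algebra with index set $I$ ($0$ the special node), Cartan matrix $(a_{ij})$, simple coroots $h_i$, fundamental weights $\Lambda_i$, null root $\delta$. $P=\bigoplus_{i\in I}\mathbb Z\Lambda_i\oplus\mathbb Z\delta$, $P_{cl}=\bigoplus_{i\in I}\mathbb Z\Lambda_i$, $cl:P\to P_{cl}$ the projection killing $\delta$; $\alpha_i=\sum_ja_{ji}\Lambda_j+\delta_{i0}\delta$. $B$ is a finite crystal with $wt:B\to P_{cl}$, Kashiwara operators $\tilde e_i,\tilde f_i$, $\varepsilon_i(b)=\max\{k:\tilde e_i^kb\ne0\}$, $\varphi_i(b)=\max\{k:\tilde f_i^kb\ne0\}$. Tensor products: $wt$ is additive; $\tilde e_i(b_1\otimes b_2)=\tilde e_ib_1\otimes b_2$ if $\varphi_i(b_1)\ge\varepsilon_i(b_2)$ and $=b_1\otimes\tilde e_ib_2$ otherwise; $\tilde f_i(b_1\otimes b_2)=\tilde f_ib_1\otimes b_2$ if $\varphi_i(b_1)>\varepsilon_i(b_2)$ and $=b_1\otimes\tilde f_ib_2$ otherwise.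 An energy function is $H:B\otimes B\to\mathbb Z$ such that whenever $\tilde e_i(b\otimes b')\neq0$: $H(\tilde e_i(b\otimes b'))=H(b\otimes b')$ if $i\ne0$; $=H(b\otimes b')+1$ if $i=0$ and $\varphi_0(b)\ge\varepsilon_0(b')$; $=H(b\otimes b')-1$ if $i=0$ and $\varphi_0(b)<\varepsilon_0(b')$. For $j\ge0$, $b\in B$, $\mu\in P$: $\mathcal P_j(b,\mu)=\{b\otimes b_j\otimes\cdots\otimes b_1\in B^{\otimes(j+1)}:wt(b_j)+\cdots+wt(b_1)=cl(\mu)\}$ and $E(b_{j+1}\otimes\cdots\otimes b_1)=\sum_{i=1}^j iH(b_{i+1}\otimes b_i)$. *)

From HB Require Import structures.
From mathcomp Require Import all_boot all_order all_algebra.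
Set Implicit Arguments. Unset Strict Implicit. Unset Printing Implicit Defensive.
Import Order.TTheory GRing.Theory Num.Theory.
Local Open Scope ring_scope.

(* Affine generalized Cartan matrices (Kac, Thm 4.3 characterization:  *)
(* an indecomposable GCM is of affine type iff there is a vector with   *)
(* positive entries in its kernel).                                     *)
Definition is_GCM (I : finType) (a : I -> I -> int) : Prop :=
  (forall i, a i i = 2) /\
  (forall i j, i != j -> a i j <= 0) /\
  (forall i j, a i j = 0 <-> a j i = 0).

Definition indecomposable (I : finType) (a : I -> I -> int) : Prop :=
  forall J : {set I}, J != set0 -> J != setT ->
    exists i j, [/\ i \in J, j \notin J & a i j != 0].

Definition affine_cartan (I : finType) (a : I -> I -> int) : Prop :=
  [/\ is_GCM a, indecomposable a &
      exists d : I -> int, (forall i, 0 < d i) /\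
        (forall i, \sum_(k : I) a i k * d k = 0)].

(* Weight lattices: P_cl = (+)_i Z Lambda_i, P = P_cl (+) Z delta.      *)
Notation Pcl I := {ffun I -> int}.
Notation Pw I := (Pcl I * int)%type.   (* (classical part, delta-coeff) *)
Definition cl (I : finType) (mu : Pw I) : Pcl I := mu.1.
(* alpha_i = sum_j a_{ji} Lambda_j + delta_{i0} delta *)
Definition alpha (I : finType) (a : I -> I -> int) (i0 i : I) : Pw I :=
  ([ffun j => a j i], (i == i0)%:Z).

Definition iterp (T : Type) (g : T -> option T) (k : nat) (x : T) : option T :=
  iter k (obind g) (Some x).

(* Used with N = cardinality of the
   (finite) set in which the g-string of x lives; under the crystal
   axioms strings have no cycles, so this is exactly max{k : g^k x <> 0}. *)
Definition maxit (T : Type) (N : nat) (g : T -> option T) (x : T) : nat :=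
  (\max_(k < N.+1 | isSome (iterp g k x)) k)%N.

Record finCrystal (I : finType) (a : I -> I -> int) := FinCrystal {
  cB :> finType;
  cwt : cB -> Pcl I;
  ce : I -> cB -> option cB;
  cf : I -> cB -> option cB;
  c_ef : forall i b b', cf i b = Some b' <-> ce i b' = Some b;
  c_wte : forall i b b', ce i b = Some b' -> cwt b' = cwt b + [ffun j => a j i];
  c_wtf : forall i b b', cf i b = Some b' -> cwt b' = cwt b - [ffun j => a j i];
  (* phi_i(b) = eps_i(b) + <h_i, wt b>,  <h_i, Lambda_j> = delta_ij *)
  c_epsphi : forall i b,
    (maxit #|cB| (cf i) b)%:Z = (maxit #|cB| (ce i) b)%:Z + cwt b i
}.

Section Crys.
Variables (I : finType) (a : I -> I -> int) (B : finCrystal a).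

Definition eps (i : I) (b : B) : nat := maxit #|B| (ce i) b.
Definition phi (i : I) (b : B) : nat := maxit #|B| (cf i) b.

(* Tensor powers.  An element b_{n} (x) ... (x) b_1 of B^{(x) n} is the *)
(* sequence [:: b_n; ...; b_1] (left-to-right).  B^{(x) (n+1)} is      *)
(* B (x) B^{(x) n}; B^{(x) 0} is the trivial one-element crystal [::]. *)
Definition tens_step (i : I) (N : nat) (e2 f2 : seq B -> option (seq B)) :
    (seq B -> option (seq B)) * (seq B -> option (seq B)) :=
  let eps2 := maxit N e2 in
  let phi2 := maxit N f2 in
  (fun s => match s with
            | [::] => None
            | b :: r => if (eps2 r <= phi i b)%N
                        then omap (fun b' => b' :: r) (ce i b)
                        else omap (fun r' => b :: r') (e2 r)
            end,
   fun s => match s with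
            | [::] => None
            | b :: r => if (eps2 r < phi i b)%N
                        then omap (fun b' => b' :: r) (cf i b)
                        else omap (fun r' => b :: r') (f2 r)
            end).

Fixpoint tensEF (i : I) (n : nat) :
    (seq B -> option (seq B)) * (seq B -> option (seq B)) :=
  match n with
  | 0 => (fun _ => None, fun _ => None)
  | n'.+1 => let ef := tensEF i n' in tens_step i (#|B| ^ n') ef.1 ef.2
  end.

Definition tensE (i : I) (n : nat) : seq B -> option (seq B) := (tensEF i n).1.

Definition tens2_e (i : I) (bb : B * B) : option (B * B) :=
  let: (b, b') := bb in
  if (eps i b' <= phi i b)%N then omap (fun x => (x, b')) (ce i b)
  else omap (fun y => (b, y)) (ce i b').

Definition is_energy (i0 : I) (H : B -> B -> int) : Prop :=
  forall (i : I) (b b' c c' : B), tens2_e i (b, b') = Some (c, c') ->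
    H c c' = H b b' +
      (if i == i0 then (if (eps i0 b' <= phi i0 b)%N then 1 else -1) else 0).

Definition inPj (j : nat) (b : B) (mu : Pw I) (p : seq B) : Prop :=
  exists r : seq B, [/\ p = b :: r, size r = j &
                        \sum_(x <- r) cwt x = cl mu].

(* E(b_{j+1} (x) ... (x) b_1) = sum_{k=1}^{j} k H(b_{k+1} (x) b_k) *)
Fixpoint Een (H : B -> B -> int) (p : seq B) : int :=
  match p with
  | x :: ((y :: _) as rest) => (size rest)%:Z * H x y + Een H rest
  | _ => 0
  end.

End Crys.

From HB Require Import structures.
From mathcomp Require Import all_boot all_order all_algebra.
From mathcomp Require Import zify ring.
Import Order.TTheory GRing.Theory Num.Theory.
Local Open Scope ring_scope.

Set Implicit Arguments. Unset Strict Implicit. Unset Printing Implicit Defensive.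

(* By the signature rule, each application of [e_i] to [b (x) b_j (x) ... (x) b_1]
   acts either on the leftmost factor or inside the tail.  In the first case the
   tail condition [eps_i(tail) <= phi_i(b)] forces [eps_i(b_j) <= phi_i(b)], so only
   [H(b (x) b_j)] changes, by [delta_0i], and [E] rises by [j delta_0i].  In the
   second case [E] drops by [delta_0i], by induction on [j]: either the tail's
   energy drops by [delta_0i], or [e_i] hits [b_j] with [phi_i(b) < eps_i(b_j)], so
   [H(b (x) b_j)] drops by one while the tail's energy rises by [(j-1) delta_0i].
   If [k] of the [n] steps act on the left, [E] changes by [(k(j+1) - n) delta_0i],
   and comparing [i]-weights in [e_i^k f_i^s b = f_i^t b] gives [k = s - t]. *)

Section Iteration.
Variables (T : Type) (g : T -> option T).

Lemma iterpS k x : iterp g k.+1 x = obind g (iterp g k x).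
Proof. by []. Qed.

Lemma iterpSr k x : iterp g k.+1 x = obind (iterp g k) (g x).
Proof.
elim: k x => [|k IH] x /=; first by case: (g x).
by rewrite /iterp /= in IH *; rewrite IH; case: (g x).
Qed.

Lemma iterp_defined_leq k l x :
  (l <= k)%N -> isSome (iterp g k x) -> isSome (iterp g l x).
Proof.
elim: k => [|k IH]; first by rewrite leqn0 => /eqP ->.
rewrite leq_eqVlt ltnS => /predU1P[-> //|lk].
by rewrite iterpS => def_k; apply: IH => //; case: (iterp g k x) def_k.
Qed.

Lemma leq_maxit N k x : (k <= N)%N -> isSome (iterp g k x) -> (k <= maxit N g x)%N.
Proof.
move=> kN def_k.
exact: (@leq_bigmax_cond _ (fun k : 'I_N.+1 => isSome (iterp g k x))
          (fun k => nat_of_ord k) (Ordinal (kN : (k < N.+1)%N))).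
Qed.

Lemma maxit_leq N m x :
  (forall k, (k <= N)%N -> isSome (iterp g k x) -> (k <= m)%N) ->
  (maxit N g x <= m)%N.
Proof. by move=> le_m; apply/bigmax_leqP => k def_k; apply: le_m; rewrite -1?ltnS. Qed.

Lemma maxit_leqN N x : (maxit N g x <= N)%N.
Proof. exact: maxit_leq. Qed.

Lemma iterp_maxit N x : isSome (iterp g (maxit N g x) x).
Proof.
apply: (big_ind (fun v => isSome (iterp g v x))) => // u v def_u def_v.
by rewrite /maxn; case: ifP.
Qed.

Lemma maxit_gt0_defined N x : (0 < maxit N g x)%N -> isSome (g x).
Proof. by move=> pos; apply: iterp_defined_leq pos (iterp_maxit N x). Qed.

End Iteration.

Section Strings.
Variables (I : finType) (a : I -> I -> int) (B : finCrystal a) (i : I).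
Hypothesis a_ii : a i i = 2.

Lemma cwt_iterp_e k (x y : B) : iterp (ce i) k x = Some y -> cwt y i = cwt x i + 2 *+ k.
Proof.
elim: k y => [|k IH] y; first by case=> <-; rewrite addr0.
rewrite iterpS; case def_z: (iterp (ce i) k x) => [z|] //= ez.
by rewrite (c_wte ez) !ffunE (IH _ def_z) a_ii -addrA -mulrSr.
Qed.

Lemma cwt_iterp_f k (x y : B) : iterp (cf i) k x = Some y -> cwt y i = cwt x i - 2 *+ k.
Proof.
elim: k y => [|k IH] y; first by case=> <-; rewrite subr0.
rewrite iterpS; case def_z: (iterp (cf i) k x) => [z|] //= fz.
by rewrite (c_wtf fz) !ffunE (IH _ def_z) a_ii -addrA -opprD -mulrSr.
Qed.

(* The [i]-weights along an [e_i]-string strictly increase, so the string does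
   not cycle; hence [eps] computed with the bound [#|B|] is the true [eps_i]. *)
Lemma e_string_lt_card k (x y : B) : iterp (ce i) k x = Some y -> (k < #|B|)%N.
Proof.
move=> def_y; pose xs l := odflt x (iterp (ce i) l x).
have wt_xs l : (l <= k)%N -> cwt (xs l) i = cwt x i + 2 *+ l.
  move=> lk; have /(iterp_defined_leq lk) : isSome (iterp (ce i) k x) by rewrite def_y.
  by rewrite /xs; case def_l: (iterp (ce i) l x) => [z|] // _; apply: cwt_iterp_e.
have uniq_xs : uniq (map xs (iota 0 k.+1)).
  rewrite map_inj_in_uniq ?iota_uniq // => l1 l2.
  rewrite !mem_iota !add0n !ltnS => l1k l2k eq_xs.
  by move: (wt_xs _ l1k); rewrite eq_xs (wt_xs _ l2k) => /addrI/eqP; lia.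
have := uniq_leq_size uniq_xs (fun z _ => mem_enum B z).
by rewrite size_map size_iota -cardT.
Qed.

Lemma leq_eps_iterp k (y y' : B) : iterp (ce i) k y = Some y' -> (k <= eps i y)%N.
Proof. by move=> def_y'; apply: leq_maxit; [apply/ltnW/(e_string_lt_card def_y') | rewrite def_y']. Qed.

Lemma eps_gt0_defined (y : B) : (0 < eps i y)%N -> exists y', ce i y = Some y'.
Proof. by move=> pos; have := maxit_gt0_defined pos; case: (ce i y) => // y' _; exists y'. Qed.

Lemma eps_leq_e (y y' : B) : ce i y = Some y' -> (eps i y <= (eps i y').+1)%N.
Proof.
move=> ey; case def_eps: (eps i y) => [//|k]; rewrite ltnS.
have := iterp_maxit (ce i) #|B| y; rewrite -/(eps i y) def_eps iterpSr ey /=.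
case def_k: (iterp (ce i) k y') => [z|] // _; exact: leq_eps_iterp def_k.
Qed.

Lemma phi_leq_e (y y' : B) : ce i y = Some y' -> (phi i y <= phi i y')%N.
Proof.
move=> ey; apply: leq_maxit; first exact: maxit_leqN.
apply: (@iterp_defined_leq _ _ (phi i y).+1); first exact: leqnSn.
by rewrite iterpSr (proj2 (c_ef _ _ _) ey); exact: iterp_maxit.
Qed.

Definition tens_eps m (r : seq B) : nat := maxit (#|B| ^ m) (tensE i m) r.

Lemma tensE_cons m (b : B) r : tensE i m.+1 (b :: r) =
  if (tens_eps m r <= phi i b)%N then omap (fun b' => b' :: r) (ce i b)
  else omap (fun r' => b :: r') (tensE i m r).
Proof. by []. Qed.

Lemma eps_leq_tens_eps_cons m (y : B) r : (eps i y <= tens_eps m.+1 (y :: r))%N.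
Proof.
have defined k : (k <= eps i y)%N -> exists y' r',
    iterp (tensE i m.+1) k (y :: r) = Some (y' :: r') /\ (eps i y <= eps i y' + k)%N.
  elim: k => [|k IH] lt_k; first by exists y, r; rewrite addn0.
  have [y' [r' [def_k le_eps]]] := IH (ltnW lt_k).
  rewrite iterpS def_k /= tensE_cons; case: ifP => left_factor.
    have [y'' ey'] : exists y'', ce i y' = Some y'' by apply: eps_gt0_defined; lia.
    by exists y'', r'; rewrite ey'; split => //; have := eps_leq_e ey'; lia.
  have tail_pos : (0 < tens_eps m r')%N by lia.
  have := maxit_gt0_defined tail_pos; case: (tensE i m r') => [r''|] // _.
  by exists y', r''; split => //; lia.
have [y' [r' [def_eps _]]] := defined _ (leqnn _).
apply: leq_maxit; last by rewrite def_eps.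
apply: leq_trans (maxit_leqN _ _ _) _; rewrite expnS leq_pmulr // expn_gt0.
by apply/orP; left; apply/card_gt0P; exists y.
Qed.

Lemma tens_eps_cons_leq_eps m (y : B) r :
  (tens_eps m r <= phi i y)%N -> (tens_eps m.+1 (y :: r) <= eps i y)%N.
Proof.
move=> tail_small.
have on_left k z : iterp (tensE i m.+1) k (y :: r) = Some z ->
    exists y', [/\ z = y' :: r, iterp (ce i) k y = Some y' & (phi i y <= phi i y')%N].
  elim: k z => [|k IH] z; first by case=> <-; exists y.
  rewrite iterpS; case def_k: (iterp _ k _) => [w|] //=.
  have [y' [-> def_y' le_phi]] := IH _ def_k.
  rewrite tensE_cons (leq_trans tail_small le_phi).
  case ey': (ce i y') => [y''|] //= [<-]; exists y''; split => //.
    by rewrite def_y'.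
  exact: leq_trans le_phi (phi_leq_e ey').
apply: maxit_leq => k _; case def_k: (iterp _ k _) => [z|] // _.
by have [y' [_ def_y' _]] := on_left _ _ def_k; apply: leq_eps_iterp def_y'.
Qed.

End Strings.

Section Energy.
Variables (I : finType) (a : I -> I -> int) (B : finCrystal a) (i i0 : I).
Hypothesis a_ii : a i i = 2.
Variable H : B -> B -> int.
Hypothesis H_energy : is_energy i0 H.
Let delta : int := (i0 == i)%:Z.

Lemma energy_e_left (b b' y : B) :
  ce i b = Some b' -> (eps i y <= phi i b)%N -> H b' y = H b y + delta.
Proof.
move=> eb le_eps; have : tens2_e i (b, y) = Some (b', y) by rewrite /tens2_e le_eps eb.
by move/H_energy => ->; rewrite /delta; case: (eqVneq i0 i) => [->|]; rewrite ?le_eps.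
Qed.

Lemma energy_e_right (b y y' : B) :
  ce i y = Some y' -> (phi i b < eps i y)%N -> H b y' = H b y - delta.
Proof.
move=> ey lt_phi; have : tens2_e i (b, y) = Some (b, y').
  by rewrite /tens2_e leqNgt lt_phi ey.
move/H_energy => ->; rewrite /delta; case: (eqVneq i0 i) => [->|_]; last by rewrite subr0.
by rewrite leqNgt lt_phi.
Qed.

Lemma Een_cons2 (x y : B) r :
  Een H (x :: y :: r) = (size r).+1%:Z * H x y + Een H (y :: r).
Proof. by []. Qed.

Lemma Een_tensE m (b : B) r p : size r = m -> tensE i m.+1 (b :: r) = Some p ->
  (exists2 b', ce i b = Some b' &
     [/\ p = b' :: r, (tens_eps i m r <= phi i b)%N & Een H p = Een H (b :: r) + m%:Z * delta])
  \/ (exists2 r', p = b :: r' /\ size r' = m & Een H p = Een H (b :: r) - delta).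
Proof.
elim: m b r p => [|m IH] b r p size_r; rewrite tensE_cons.
  case: r size_r => // _; case: ifP => // on_b.
  by case: (ce i b) => [b'|] // [<-]; left; exists b'.
case: r size_r => [//|y r] [size_r].
case: ifP => [on_b|on_tail].
  case eb: (ce i b) => [b'|] // [<-]; left; exists b'; split => //.
  rewrite !Een_cons2 (energy_e_left eb) ?size_r; last first.
    exact: leq_trans (eps_leq_tens_eps_cons _ _ _ _) on_b.
  by rewrite mulrDr addrAC.
case def_r': (tensE i m.+1 (y :: r)) => [r'|] // [<-]; right.
case: (IH y r r' size_r def_r') => [[y' ey [-> small_tail E_tail]]|[r'' [-> size_r''] E_tail]].
  exists (y' :: r); first by rewrite /= size_r.
  rewrite !Een_cons2 E_tail size_r (energy_e_right ey); last first.
    by rewrite (leq_trans _ (tens_eps_cons_leq_eps a_ii small_tail)) // ltnNge on_tail.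
  by rewrite -addn1 PoszD; ring.
exists (y :: r''); first by rewrite /= size_r''.
by rewrite !Een_cons2 E_tail size_r'' size_r addrA.
Qed.

Lemma Een_iterp_tensE j n (b : B) r p :
  size r = j -> iterp (tensE i j.+1) n (b :: r) = Some p ->
  exists k y r', [/\ p = y :: r', size r' = j, iterp (ce i) k b = Some y &
    Een H p = Een H (b :: r) + (k%:Z * j.+1%:Z - n%:Z) * delta].
Proof.
move=> size_r; elim: n p => [|n IH] p.
  by case=> <-; exists 0%N, b, r; split => //; ring.
rewrite iterpS; case def_n: (iterp _ n _) => [q|] //= def_p.
have [k [y [r' [def_q size_r' def_y E_q]]]] := IH _ def_n; subst q.
case: (Een_tensE size_r' def_p) => [[y' ey [-> _ E_p]]|[r'' [-> size_r''] E_p]].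
  exists k.+1, y', r'; split => //; first by rewrite iterpS def_y.
  by rewrite E_p E_q -[k.+1]addn1 -[n.+1]addn1 !PoszD; ring.
exists k, y, r''; split => //.
by rewrite E_p E_q -[n.+1]addn1 PoszD; ring.
Qed.

End Energy.

Theorem mainTheorem5 (I : finType) (a : I -> I -> int) (i0 : I)
  (Haff : affine_cartan a) (B : finCrystal a) (H : B -> B -> int)
  (HH : is_energy i0 H)
  (b : B) (i : I) (xi : Pw I) (j n s t : nat)
  (Hts : (t <= s)%N) (Hsm : (s <= phi i b)%N)
  (bs bt : B) (Hbs : iterp (cf i) s b = Some bs) (Hbt : iterp (cf i) t b = Some bt)
  (p p' : seq B)
  (Hp : inPj j bs xi p)
  (Hep : iterp (tensE i j.+1) n p = Some p')
  (Hp' : inPj j bt (xi + alpha a i0 i *~ (n%:Z + t%:Z - s%:Z)) p') :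
  Een H p' = Een H p + ((j.+1)%:Z * (s%:Z - t%:Z) - n%:Z) * (i0 == i)%:Z.
Proof.
have [[a_ii _] _ _] := Haff; have {a_ii} a_ii := a_ii i.
have [r [def_p size_r _]] := Hp; subst p.
have [k [y [r' [def_p' _ def_y ->]]]] := Een_iterp_tensE a_ii HH size_r Hep.
have [r'' [def_p'' _ _]] := Hp'.
have eq_y : y = bt by move: def_p''; rewrite def_p' => -[].
have k_eq : k%:Z = s%:Z - t%:Z.
  have := cwt_iterp_e a_ii def_y; rewrite eq_y (cwt_iterp_f a_ii Hbt) (cwt_iterp_f a_ii Hbs).
  lia.
by rewrite k_eq [_ * j.+1%:Z]mulrC.
Qed.
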